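(* Let $\lambda\in\mathbf{C}$ with $\lambda\neq 0$ and $\lambda\neq1$. For every $n\in\mathbf{Z}_{+}$ (nonnegative integers), \[ \lambda H_{n}(x\vert\lambda^{-1})+H_{n}(x\vert\lambda)=(1+\lambda)\sum_{k=0}^{n}\binom{n}{k}H_{n-k}(\lambda^{-1})H_{k}(x\vert\lambda). \]
   Context: For $\mu\in\mathbf{C}$, $\mu\neq1$, the Frobenius–Euler polynomials $H_n(x\vert\mu)$ are defined by the generating function $\frac{1-\mu}{e^{t}-\mu}e^{xt}=\sum_{n=0}^{\infty}H_{n}(x\vert\mu)\frac{t^{n}}{n!}$, and the Frobenius–Euler numbers are $H_n(\mu)=H_n(0\vert\mu)$. *)

(* Complex numbers are modelled as R[i] for an arbitrary
   real-number model R : realType (e.g. Stdlib's R). *)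
From mathcomp Require Import all_boot all_order all_algebra.
From mathcomp Require Import complex.
From mathcomp Require Import reals.
Set Implicit Arguments. Unset Strict Implicit. Unset Printing Implicit Defensive.
Import Order.TTheory GRing.Theory Num.Theory.
Local Open Scope ring_scope.

(* Frobenius-Euler polynomials H_n(x | mu), mu <> 1, defined by
     (1 - mu) / (e^t - mu) * e^{xt} = sum_n H_n(x|mu) t^n / n!.
   Multiplying by (e^t - mu) and comparing coefficients of t^n/n! on both
   sides, the generating function is equivalent to
     sum_{k=0}^{n} C(n,k) H_k(x|mu) - mu H_n(x|mu) = (1 - mu) x^n,
   i.e. H_n = x^n - (1-mu)^{-1} sum_{k<n} C(n,k) H_k. *)
Fixpoint FE_list (F : fieldType) (mu x : F) (n : nat) : seq F :=
  match n with
  | 0 => [:: 1]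
  | n'.+1 =>
      let s := FE_list mu x n' in
      rcons s (x ^+ n - (1 - mu)^-1 * \sum_(k < n) ('C(n, k))%:R * s`_k)
  end.

Definition FE_poly (F : fieldType) (mu x : F) (n : nat) : F :=
  (FE_list mu x n)`_n.

Definition FE_num (F : fieldType) (mu : F) (n : nat) : F := FE_poly mu 0 n.

(* Write A, C, B for the exponential generating functions of H_n(x|lam),
   H_n(x|1/lam) and H_n(1/lam), and Y = e^{xt}, E = e^t.  The defining
   recurrences say A (E - lam) = (1 - lam) Y, C (lam E - 1) = (lam - 1) Y and
   B (lam E - 1) = lam - 1, hence C = B Y and lam C + A = (1 + lam) A B, whose
   n-th coefficient is the claim.  The series are truncated after t^n, i.e.
   they are polynomials taken modulo t^(n+1); dividing by E - lam and
   lam E - 1 is legitimate there because their constant terms are nonzero. *)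
From mathcomp Require Import all_boot all_order all_algebra.
From mathcomp Require Import complex.
From mathcomp Require Import reals.
From mathcomp.algebra_tactics Require Import ring.
Set Implicit Arguments. Unset Strict Implicit. Unset Printing Implicit Defensive.
Import Order.TTheory GRing.Theory Num.Theory.
Local Open Scope ring_scope.

Section FrobeniusEulerRecurrence.
Variable F : fieldType.
Implicit Types (mu x : F) (m : nat).

Lemma size_FE_list mu x m : size (FE_list mu x m) = m.+1.
Proof. by elim: m => [|m IHm] //=; rewrite size_rcons IHm. Qed.

Lemma nth_FE_list mu x m k : (k <= m)%N -> (FE_list mu x m)`_k = FE_poly mu x k.
Proof.
elim: m => [|m IHm]; first by rewrite leqn0 => /eqP ->.
rewrite leq_eqVlt => /orP [/eqP -> //|lt_km].
by rewrite /= nth_rcons size_FE_list lt_km IHm.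
Qed.

Lemma FE_polyS mu x m :
  FE_poly mu x m.+1 =
  x ^+ m.+1 - (1 - mu)^-1 * \sum_(k < m.+1) ('C(m.+1, k))%:R * FE_poly mu x k.
Proof.
rewrite {1}/FE_poly /= nth_rcons size_FE_list ltnn eqxx.
by congr (_ - _ * _); apply: eq_bigr => k _; rewrite nth_FE_list // -ltnS.
Qed.

Lemma FE_poly_binomial_sum mu x m : mu != 1 ->
  \sum_(k < m.+1) ('C(m, k))%:R * FE_poly mu x k - mu * FE_poly mu x m
  = (1 - mu) * x ^+ m.
Proof.
move=> mu_neq1; have mu1_neq0 : 1 - mu != 0 by rewrite subr_eq0 eq_sym.
case: m => [|m]; first by rewrite big_ord1 /FE_poly /= bin0 expr0 !mulr1.
by rewrite big_ord_recr /= binn mul1r FE_polyS; field.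
Qed.

End FrobeniusEulerRecurrence.

Definition binconv (R : pzSemiRingType) (a b : nat -> R) (i : nat) : R :=
  \sum_(j < i.+1) ('C(i, j))%:R * a j * b (i - j)%N.

Lemma coprimep_Xn (R : idomainType) n (q : {poly R}) :
  q`_0 != 0 -> coprimep 'X^n q.
Proof.
move=> q0_neq0; rewrite coprimep_expl // coprimep_sym coprimepX.
by rewrite rootE horner_coef0.
Qed.

Section GeneratingFunctionRelations.
Variables (F : idomainType) (m E A B C Y : {poly F}) (lam : F).
Local Notation l := lam%:P.
Hypotheses (coprime_El : coprimep m (E - l)) (coprime_lE1 : coprimep m (l * E - 1)).
Hypotheses (dvdp_A : m %| A * (E - l) - (1 - l) * Y)
           (dvdp_B : m %| B * (l * E - 1) - (l - 1))
           (dvdp_C : m %| C * (l * E - 1) - (l - 1) * Y).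

Lemma dvdp_BY_C : m %| B * Y - C.
Proof.
rewrite -(Gauss_dvdpl _ coprime_lE1).
have -> : (B * Y - C) * (l * E - 1) =
  Y * (B * (l * E - 1) - (l - 1)) - (C * (l * E - 1) - (l - 1) * Y) by ring.
by rewrite dvdp_sub ?dvdp_mull.
Qed.

Lemma dvdp_FE_duality : m %| l * C + A - (1 + lam)%:P * (A * B).
Proof.
rewrite -(Gauss_dvdpl _ coprime_El) polyCD polyC1.
have -> : (l * C + A - (1 + l) * (A * B)) * (E - l) =
    (C * (l * E - 1) - (l - 1) * Y) + (A * (E - l) - (1 - l) * Y)
  - (1 + l) * B * (A * (E - l) - (1 - l) * Y)
  - (1 + l) * (1 - l) * (B * Y - C) by ring.
by rewrite dvdp_sub ?dvdp_mull ?dvdp_BY_C // dvdp_sub ?dvdp_mull // dvdp_add.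
Qed.

End GeneratingFunctionRelations.

Section TruncatedEGF.
Variables (F : numFieldType) (N : nat).
Implicit Types (a b g : nat -> F) (p : {poly F}).

Lemma natr_fact_neq0 n : (n`!)%:R != 0 :> F.
Proof. by rewrite pnatr_eq0 -lt0n fact_gt0. Qed.

Definition egf a : {poly F} := \poly_(i < N.+1) (a i / (i`!)%:R).

Local Notation E := (egf (fun=> 1)).

Lemma coef_egf a i : (i <= N)%N -> (egf a)`_i = a i / (i`!)%:R.
Proof. by move=> le_iN; rewrite coef_poly ltnS le_iN. Qed.

Lemma egf_exprn0 : egf (fun k => 0 ^+ k) = 1.
Proof.
apply/polyP => i; rewrite coef_poly coef1.
case: i => [|i] /=; first by rewrite expr0 divr1.
by rewrite expr0n /= mul0r; case: ifP.
Qed.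

Lemma coef_egfM a b i : (i <= N)%N ->
  (egf a * egf b)`_i = binconv a b i / (i`!)%:R.
Proof.
move=> le_iN; rewrite coefM /binconv mulr_suml; apply: eq_bigr => -[j lt_ji] _ /=.
have le_ji : (j <= i)%N by rewrite -ltnS.
rewrite !coef_egf ?(leq_trans (leq_subr _ _) le_iN) ?(leq_trans le_ji le_iN) //.
have /(congr1 (fun k => k%:R : F)) := bin_fact le_ji; rewrite !natrM => <-.
have binF_neq0 : ('C(i, j))%:R != 0 :> F by rewrite pnatr_eq0 -lt0n bin_gt0.
by field; rewrite binF_neq0 !natr_fact_neq0.
Qed.

Lemma dvdp_Xn_coef p : (forall i, (i <= N)%N -> p`_i = 0) -> 'X^(N.+1) %| p.
Proof.
move=> p_lowN; apply/modp_eq0P; rewrite -Pdiv.IdomainMonic.take_poly_modp.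
apply/polyP => i; rewrite coef_take_poly coef0.
by case: ifP => // lt_iN; apply: p_lowN; rewrite -ltnS.
Qed.

Lemma coef_dvdp_Xn p : 'X^(N.+1) %| p -> p`_N = 0.
Proof. by case/dvdpP => q ->; rewrite coefMXn ltnSn. Qed.

Lemma egf_binomial_recurrence a g (al be ga : F) :
  (forall i, al * binconv a (fun=> 1) i - be * a i = ga * g i) ->
  'X^(N.+1) %| egf a * (al%:P * E - be%:P) - ga%:P * egf g.
Proof.
move=> rec_a; apply: dvdp_Xn_coef => i le_iN.
rewrite coefB mulrBr coefB mulrCA !coefCM coefMC coef_egfM // !coef_egf //.
have := natr_fact_neq0 i; move: (rec_a i).
set S := binconv _ _ _ => rec_ai fact_neq0.
transitivity ((al * S - be * a i - ga * g i) / (i`!)%:R); first by field.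
by rewrite rec_ai subrr mul0r.
Qed.

Lemma egf_FE_poly (c mu x : F) : mu != 1 ->
  'X^(N.+1) %| egf (FE_poly mu x) * (c%:P * E - (c * mu)%:P)
             - (c * (1 - mu))%:P * egf (fun k => x ^+ k).
Proof.
move=> mu_neq1; apply: egf_binomial_recurrence => i.
rewrite -mulrA -mulrBr -mulrA -(FE_poly_binomial_sum x i mu_neq1).
by congr (c * (_ - _)); apply: eq_bigr => k _; rewrite mulr1.
Qed.

Lemma coprimep_Xn_egf1 (al be : F) : al != be ->
  coprimep 'X^(N.+1) (al%:P * E - be%:P).
Proof.
move=> al_neq_be; apply: coprimep_Xn.
by rewrite coefB coefCM coefC coef_egf // divr1 mulr1 subr_eq0.
Qed.

Lemma egf_dvdp_coefN (c d : F) a b a' b' :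
  'X^(N.+1) %| c%:P * egf a + egf b - d%:P * (egf a' * egf b') ->
  c * a N + b N = d * binconv a' b' N.
Proof.
move/coef_dvdp_Xn; rewrite coefB coefD !coefCM coef_egfM // !coef_egf //.
rewrite mulrA -mulrDl mulrA -mulrBl => /eqP.
by rewrite mulf_eq0 invr_eq0 (negPf (natr_fact_neq0 N)) orbF subr_eq0 => /eqP.
Qed.

End TruncatedEGF.

Theorem theorem2 (R : realType) (lam x : R[i]) (n : nat) :
  lam != 0 -> lam != 1 ->
  lam * FE_poly lam^-1 x n + FE_poly lam x n =
  (1 + lam) * \sum_(k < n.+1)
      ('C(n, k))%:R * FE_num lam^-1 (n - k) * FE_poly lam x k.
Proof.
move=> lam_neq0 lam_neq1; set mu := lam^-1.
have mu_neq1 : mu != 1 by rewrite invr_eq1.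
have lam_mu : lam * mu = 1 by rewrite mulfV.
have dvdp_A := egf_FE_poly n 1 x lam_neq1.
have dvdp_B := egf_FE_poly n lam 0 mu_neq1.
have dvdp_C := egf_FE_poly n lam x mu_neq1.
have one_neq_lam : 1 != lam by rewrite eq_sym.
have coprime_El := coprimep_Xn_egf1 n one_neq_lam.
have coprime_lE1 := coprimep_Xn_egf1 n lam_neq1.
rewrite !mul1r polyCB polyC1 in dvdp_A coprime_El.
rewrite lam_mu [lam * _]mulrBr mulr1 lam_mu polyCB polyC1 in dvdp_B dvdp_C.
rewrite egf_exprn0 mulr1 polyC1 in dvdp_B coprime_lE1.
move: (dvdp_FE_duality coprime_El coprime_lE1 dvdp_A dvdp_B dvdp_C).
move/egf_dvdp_coefN => ->; rewrite /binconv.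
by congr (_ * _); apply: eq_bigr => k _; rewrite mulrAC.
Qed.
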